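(* Let $n,m\ge 1$, let $\vec k=(k_1,\dots,k_m)$ be a vector of positive integer capacities with $k_1+\dots+k_m<n$, let $\vec x\in[0,1]^n$ and $\vec y\in[0,1]^m$. Then the First-Come-First-Served game associated with $\vec x$, $\vec y$ and $\vec k$ admits at least one pure Nash Equilibrium.
   Context: There are $n$ agents with positions $\vec x=(x_1,\dots,x_n)\in[0,1]^n$ and $m$ facilities with capacities $k_1,\dots,k_m$; $\vec y=(y_1,\dots,y_m)$ is a facility location, $y_j$ being the position of the facility of capacity $k_j$. A fixed total priority order on the agents is used to break ties. The First-Come-First-Served (FCFS) game induced by $(\vec x,\vec y)$: each agent $i$ chooses a pure strategy $s_i\in\{1,\dots,m\}$; for a profile $\vec s$, let $\mathcal S_j$ be the set of agents choosing $j$, and let $T_j\subseteq\mathcal S_j$ consist of the $\min(k_j,|\mathcal S_j|)$ agents of $\mathcal S_j$ with the smallest distances $|x_i-y_j|$ (ties broken by the priority order). The utility of agent $i$ is $u_i(\vec x,\vec y;\vec s)=1-|x_i-y_j|$ if $i\in T_j$ for some $j$, and $0$ otherwise. A pure Nash Equilibrium is a profile from which no agent can strictly increase its utility by unilaterally changing its strategy. *)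

From mathcomp Require Import all_boot all_order all_algebra.
Set Implicit Arguments. Unset Strict Implicit. Unset Printing Implicit Defensive.
Import Order.TTheory GRing.Theory Num.Theory.
Local Open Scope ring_scope.

(* Agents are 'I_n, facilities are 'I_m.  x i = position of agent i,
   y j = position of facility j (capacity k j).  The fixed total priority
   order on agents is given by an injective rank [prio : 'I_n -> nat]:
   agent a has priority over agent b iff prio a < prio b. *)

Section FCFS.
Variables (R : realFieldType) (n m : nat).
Variables (x : 'I_n -> R) (y : 'I_m -> R) (k : 'I_m -> nat) (prio : 'I_n -> nat).

Definition dist (i : 'I_n) (j : 'I_m) : R := `|x i - y j|.

(* a precedes b at facility j: strictly closer, or equally close with
   higher priority (the lexicographic order used to select T_j). *)
Definition precedes (j : 'I_m) (a b : 'I_n) : bool :=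
  (dist a j < dist b j) || ((dist a j == dist b j) && (prio a < prio b)%N).

(* i belongs to T_j for j = s i: i is among the k_j first agents of S_j
   in the order [precedes j] (equivalently among the min(k_j,|S_j|) first). *)
Definition served (s : 'I_n -> 'I_m) (i : 'I_n) : bool :=
  (#|[set a | (s a == s i) && precedes (s i) a i]| < k (s i))%N.

Definition utility (s : 'I_n -> 'I_m) (i : 'I_n) : R :=
  if served s i then 1 - dist i (s i) else 0.

Definition deviate (s : 'I_n -> 'I_m) (i : 'I_n) (j : 'I_m) : 'I_n -> 'I_m :=
  fun a => if a == i then j else s a.

Definition pure_NE (s : 'I_n -> 'I_m) : Prop :=
  forall (i : 'I_n) (j : 'I_m), utility (deviate s i j) i <= utility s i.

End FCFS.

From mathcomp Require Import all_boot all_order all_algebra.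
From mathcomp Require Import lra.
Import Order.TTheory GRing.Theory Num.Theory.
Set Implicit Arguments. Unset Strict Implicit. Unset Printing Implicit Defensive.
Local Open Scope ring_scope.

(* The equilibrium is built greedily: as long as some unassigned agent can be
   placed at a facility that is not yet full, assign the agent-facility pair
   of smallest distance, ties broken by priority.  The resulting partial
   assignment is stable: a facility that an agent prefers to its own (every
   facility, for an unassigned agent) is full, and filled with agents who
   precede that agent there.  Sending the unassigned agents anywhere then
   gives an equilibrium: assigned agents are served, and every profitable
   deviation is to a facility where the deviator is crowded out. *)

Section FCFSEquilibrium.
Variables (R : realFieldType) (n m : nat).
Variables (x : 'I_n -> R) (y : 'I_m -> R) (k : 'I_m -> nat) (prio : 'I_n -> nat).
Hypothesis prio_inj : injective prio.

Local Notation d := (dist x y).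
Local Notation precedes := (precedes x y prio).
Local Notation served := (served x y k prio).
Local Notation utility := (utility x y k prio).

Definition claim_key (a : 'I_n) (j : 'I_m) : R *l nat := (d a j, prio a).

Lemma precedesE j a b : precedes j a b = (claim_key a j < claim_key b j)%O.
Proof. by rewrite /precedes /claim_key ltxi_pair; case: ltgtP; rewrite //= ltnNge. Qed.

Lemma precedes_irr j a : ~~ precedes j a a.
Proof. by rewrite precedesE ltxx. Qed.

Lemma precedes_asym j a b : precedes j a b -> ~~ precedes j b a.
Proof. by rewrite !precedesE => /lt_gtF ->. Qed.

Implicit Types (M : 'I_n -> option 'I_m) (a b c i : 'I_n) (j : 'I_m).

Definition load M j := #|[set a | M a == Some j]|.
Definition full M j := (k j <= load M j)%N.
Definition available M a j := (M a == None) && ~~ full M j.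
Definition prefers M a j := if M a is Some j' then d a j < d a j' else true.
Definition assign M c jc a := if a == c then Some jc else M a.

Definition stable M := [/\ forall j, (load M j <= k j)%N,
  forall a b j, M b = Some j -> prefers M a j -> precedes j b a &
  forall a j, M a != None -> prefers M a j -> full M j].

Lemma load_assign M c jc j : M c = None ->
  load (assign M c jc) j = (load M j + (j == jc))%N.
Proof.
move=> Mc; rewrite /load; have [->|ne_j] := eqVneq j jc.
  rewrite (_ : [set a | _] = c |: [set a | M a == Some jc]).
    by rewrite cardsU1 inE Mc addnC.
  by apply/setP => a; rewrite !inE /assign; case: (eqVneq a c) => [->|]; rewrite ?eqxx.
rewrite addn0; apply: eq_card => a; rewrite !inE /assign.
case: (eqVneq a c) => [->|//]; rewrite Mc; apply/negbTE.
by apply: contra ne_j => /eqP[->].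
Qed.

Lemma full_assign M c jc j : M c = None -> full M j -> full (assign M c jc) j.
Proof. by move=> Mc; rewrite /full load_assign // => /leq_trans->; rewrite ?leq_addr. Qed.

Lemma prefers_assign M c jc a j : M c = None ->
  prefers (assign M c jc) a j -> prefers M a j.
Proof. by move=> Mc; rewrite /prefers /assign; case: eqVneq => [->|]; rewrite ?Mc. Qed.

Lemma stable_empty : stable (fun=> None).
Proof.
by split=> // j; rewrite /load (_ : [set a | _] = set0) ?cards0 //; apply/setP.
Qed.

Section GreedyStep.
Variables (M : 'I_n -> option 'I_m) (c : 'I_n) (jc : 'I_m).
Hypotheses (stableM : stable M) (avail_c : available M c jc).
Hypothesis min_c : forall a j, available M a j -> (claim_key c jc <= claim_key a j)%O.

Let Mc : M c = None. Proof. by case/andP: avail_c => /eqP. Qed.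
Let nfull_c : ~~ full M jc. Proof. by case/andP: avail_c. Qed.

Lemma stable_assign_cap j : (load (assign M c jc) j <= k j)%N.
Proof.
have [cap _ _] := stableM; rewrite load_assign //.
by case: eqVneq => [->|_]; rewrite ?addn1 ?ltnNge ?addn0.
Qed.

Lemma stable_assign_precedes a b j : assign M c jc b = Some j ->
  prefers (assign M c jc) a j -> precedes j b a.
Proof.
have [_ prec fullM] := stableM.
rewrite {1}/assign.
case: (eqVneq b c) => [-> [<-] | _ Mb /(prefers_assign Mc)]; last exact: prec.
move=> pref_a; have ne_ac : a != c.
  by apply: contraTneq pref_a => ->; rewrite /prefers /assign eqxx ltxx.
case Ma: (M a) => [ja|].
  by move: nfull_c; rewrite (fullM a jc) ?Ma ?(prefers_assign Mc pref_a).
have: (claim_key c jc <= claim_key a jc)%O by apply: min_c; rewrite /available Ma.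
by rewrite le_eqVlt -precedesE => /orP[/eqP[_ /prio_inj ac]|//]; rewrite ac eqxx in ne_ac.
Qed.

Lemma stable_assign_full a j : assign M c jc a != None ->
  prefers (assign M c jc) a j -> full (assign M c jc) j.
Proof.
have [_ _ fullM] := stableM.
move=> assigned_a pref_a; apply: full_assign => //.
have [eq_ac | ne_ac] := eqVneq a c; last first.
  by apply: fullM (prefers_assign Mc pref_a); rewrite /assign (negbTE ne_ac) in assigned_a.
move: pref_a; rewrite eq_ac /prefers /assign eqxx; apply: contraTT => nfull_j.
have := min_c (a := c) (j := j); rewrite /available Mc nfull_j => /(_ isT).
by rewrite /claim_key lexi_pair -leNgt => /andP[].
Qed.

Lemma stable_assign : stable (assign M c jc).
Proof.
split; [exact: stable_assign_cap | exact: stable_assign_precedes |].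
exact: stable_assign_full.
Qed.

End GreedyStep.

Lemma stable_saturated_exists :
  exists2 M, stable M & forall a j, ~~ available M a j.
Proof.
suff: forall M, stable M -> exists2 M', stable M' & forall a j, ~~ available M' a j.
  by apply; exact: stable_empty.
move=> M0; have [N] := ubnP #|[set a | M0 a == None]|.
elim: N M0 => // N IH M ltN stableM.
have [p0 avail0|none] := pickP (fun p : 'I_n * 'I_m => available M p.1 p.2); last first.
  by exists M => // a j; rewrite (none (a, j)).
have [[c jc] /= avail_c min_c] :=
  @arg_minP _ _ _ p0 (fun p => available M p.1 p.2) (fun p => claim_key p.1 p.2) avail0.
apply: (IH (assign M c jc)); last first.
  by apply: stable_assign => // a j /(min_c (a, j)).
have Mc : M c = None by case/andP: avail_c => /eqP.
have -> : [set a | assign M c jc a == None] = [set a | M a == None] :\ c.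
  by apply/setP => a; rewrite !inE /assign; case: (eqVneq a c).
by rewrite (cardsD1 c) inE Mc in ltN.
Qed.

Lemma saturated_prefers_full M a j : stable M -> ~~ available M a j ->
  prefers M a j -> full M j.
Proof.
case=> _ _ fullM; rewrite /available; case Ma: (M a) => [ja|] /=; last by rewrite negbK.
by move=> _; apply: fullM; rewrite Ma.
Qed.

Definition profile (j0 : 'I_m) M a := odflt j0 (M a).

Lemma served_assigned j0 M a j : stable M -> M a = Some j -> served (profile j0 M) a.
Proof.
case=> cap prec _ Ma; rewrite /served /profile Ma /=.
apply: leq_trans (cap j); apply: proper_card; apply/properP; split.
  apply/subsetP => b; rewrite !inE /profile; case Mb: (M b) => [jb|] /=.
    by case/andP=> /eqP->.
  case/andP=> _; apply: contraLR => _; apply: precedes_asym.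
  by apply: prec Ma _; rewrite /prefers Mb.
by exists a; rewrite !inE ?Ma // (negbTE (precedes_irr _ _)) andbF.
Qed.

Lemma crowded_out M (s : 'I_n -> 'I_m) i j : full M j -> s i = j ->
  (forall b, M b = Some j -> s b = j /\ precedes j b i) -> ~~ served s i.
Proof.
move=> fullj si crowd; rewrite /served si -leqNgt; apply: leq_trans fullj _.
apply: subset_leq_card; apply/subsetP => b; rewrite !inE => /eqP /crowd[-> ->].
by rewrite eqxx.
Qed.

Section Utility.
Hypothesis d_le1 : forall a j, d a j <= 1.

Lemma utility_ge0 s a : 0 <= utility s a.
Proof. by rewrite /utility; case: ifP => // _; rewrite subr_ge0. Qed.

Lemma utility_le s a : utility s a <= 1 - d a (s a).
Proof. by rewrite /utility; case: ifP => // _; rewrite subr_ge0. Qed.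

Lemma stable_profile_NE j0 M : stable M -> (forall a j, ~~ available M a j) ->
  pure_NE x y k prio (profile j0 M).
Proof.
move=> stableM saturated i j; set s := profile j0 M.
have dev_i : deviate s i j i = j by rewrite /deviate eqxx.
have [pref | npref] := boolP (prefers M i j).
  suff /negbTE unserved : ~~ served (deviate s i j) i.
    by rewrite /utility unserved utility_ge0.
  apply: (crowded_out (saturated_prefers_full stableM (saturated i j) pref)) => //.
  have [_ prec _] := stableM.
  move=> b Mb; have prec_bi := prec _ _ _ Mb pref; split => //.
  have ne_bi : b != i by apply: contraTneq prec_bi => ->; exact: precedes_irr.
  by rewrite /deviate (negbTE ne_bi) /s /profile Mb.
move: npref; rewrite /prefers; case Mi: (M i) => [ji|//]; rewrite -leNgt => le_d.
rewrite {2}/utility (served_assigned j0 stableM Mi) /s /profile Mi /=.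
by apply: le_trans (utility_le _ _) _; rewrite dev_i lerB.
Qed.

End Utility.

End FCFSEquilibrium.

Lemma dist_le1 (R : realFieldType) (n m : nat) (x : 'I_n -> R) (y : 'I_m -> R) :
  (forall i, 0 <= x i <= 1) -> (forall j, 0 <= y j <= 1) ->
  forall i j, dist x y i j <= 1.
Proof.
move=> hx hy i j; rewrite /dist ler_norml.
by move: (hx i) (hy j) => /andP[? ?] /andP[? ?]; apply/andP; split; lra.
Qed.

Theorem theorem1 (R : realFieldType) (n m : nat)
  (x : 'I_n -> R) (y : 'I_m -> R) (k : 'I_m -> nat) (prio : 'I_n -> nat) :
  (1 <= n)%N -> (1 <= m)%N ->
  (forall j, (0 < k j)%N) ->
  (\sum_(j < m) k j < n)%N ->
  (forall i, 0 <= x i <= 1) ->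
  (forall j, 0 <= y j <= 1) ->
  injective prio ->
  exists s : 'I_n -> 'I_m, pure_NE x y k prio s.
Proof.
move=> _ m_gt0 _ _ hx hy prio_inj.
have [M stableM saturated] := stable_saturated_exists x y k prio_inj.
exists (profile (Ordinal m_gt0) M).
exact: stable_profile_NE (dist_le1 hx hy) _ _ stableM saturated.
Qed.
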